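(* Let ${\cal C}$ be a semi-degenerate congruence-modular variety and $A\in{\cal C}$ a semiprime algebra. Then for every $\Omega\subseteq{\rm Con}(A)$ there exists $\theta\in{\rm Con}(A)$ such that ${\rm Ann}_{{\rm Con}(A)}(\Omega)={\rm Ann}_{{\rm Con}(A)}(\theta)$; that is, $\{{\rm Ann}_{{\rm Con}(A)}(\Omega)\mid\Omega\subseteq{\rm Con}(A)\}=\{{\rm Ann}_{{\rm Con}(A)}(\theta)\mid\theta\in{\rm Con}(A)\}$.
   Context: ${\cal C}$ semi-degenerate: no nontrivial member has a one-element subalgebra. ${\rm Con}(A)$: congruence lattice with bounds $\Delta_A,\nabla_A=A^2$; $[\cdot,\cdot]_A$: modular commutator. A congruence $\phi\ne\nabla_A$ is prime if $[\theta,\zeta]_A\subseteq\phi$ implies $\theta\subseteq\phi$ or $\zeta\subseteq\phi$. $\rho_A(\theta)$: intersection of all prime congruences containing $\theta$. $A$ semiprime: $\rho_A(\Delta_A)=\Delta_A$. In the lattice ${\rm Con}(A)$, ${\rm Ann}_{{\rm Con}(A)}(\Omega)=\{\zeta\in{\rm Con}(A)\mid\zeta\cap\omega=\Delta_A\ \forall\omega\in\Omega\}$ and ${\rm Ann}_{{\rm Con}(A)}(\theta)={\rm Ann}_{{\rm Con}(A)}(\{\theta\})$. *)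

From mathcomp Require Import all_boot.
Set Implicit Arguments. Unset Strict Implicit. Unset Printing Implicit Defensive.

Record signature := Signature { sym : Type; arity : sym -> nat }.

Record algebra (S : signature) := Algebra {
  carrier :> Type;
  op : forall f : sym S, ('I_(arity f) -> carrier) -> carrier }.

Inductive term (S : signature) : Type :=
| Var of nat
| App (f : sym S) of ('I_(arity f) -> term S).

Fixpoint eval (S : signature) (A : algebra S) (v : nat -> A) (t : term S) : A :=
  match t with
  | Var n => v n
  | App f g => @op S A f (fun i => eval v (g i))
  end.

(* Varieties are equational classes: the models of a set E of identities. *)
Definition models S (E : term S -> term S -> Prop) (A : algebra S) : Prop :=
  forall s t, E s t -> forall v : nat -> A, eval v s = eval v t.

Section Cong.
Variables (S : signature) (A : algebra S).

Definition rel := A -> A -> Prop.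
Definition subrel (R Q : rel) := forall x y, R x y -> Q x y.

Record con := Con {
  crel :> A -> A -> Prop;
  con_refl : forall x, crel x x;
  con_sym : forall x y, crel x y -> crel y x;
  con_trans : forall x y z, crel x y -> crel y z -> crel x z;
  con_compat : forall (f : sym S) (a b : 'I_(arity f) -> A),
      (forall i, crel (a i) (b i)) -> crel (@op S A f a) (@op S A f b) }.

Definition DeltaA : rel := fun x y => x = y.
Definition nablaA : rel := fun _ _ => True.

Definition cg (R : rel) : rel :=
  fun x y => forall th : con, subrel R th -> th x y.

Definition cmeet (a b : rel) : rel := fun x y => a x y /\ b x y.
Definition cjoin (a b : rel) : rel := cg (fun x y => a x y \/ b x y).

Definition con_modular : Prop :=
  forall a b c : con, subrel a c ->
    forall x y, cjoin a (cmeet b c) x y <-> cmeet (cjoin a b) c x y.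

(* Term condition: C(a, b; d), "a centralizes b modulo d".  Variables i with
   P i play the role of the a-tuple, the others of the b-tuple. *)
Definition centralizes (a b d : rel) : Prop :=
  forall (t : term S) (P : nat -> bool) (u w c e : nat -> A),
    (forall i, a (u i) (w i)) -> (forall i, b (c i) (e i)) ->
    let mix (p q : nat -> A) := fun i => if P i then p i else q i in
    d (eval (mix u c) t) (eval (mix u e) t) ->
    d (eval (mix w c) t) (eval (mix w e) t).

(* The (term-condition) commutator [a, b]_A: the least congruence d with
   C(a, b; d).  In congruence-modular varieties this is the modular commutator. *)
Definition comm (a b : rel) : rel :=
  fun x y => forall d : con, centralizes a b d -> d x y.

Definition prime_con (phi : con) : Prop :=
  ~ subrel nablaA phi /\
  forall th ze : con, subrel (comm th ze) phi -> subrel th phi \/ subrel ze phi.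

Definition rho (th : rel) : rel :=
  fun x y => forall phi : con, prime_con phi -> subrel th phi -> phi x y.

Definition semiprime : Prop := forall x y, rho DeltaA x y <-> DeltaA x y.

Definition Ann (Om : con -> Prop) (ze : con) : Prop :=
  forall om : con, Om om -> forall x y, cmeet ze om x y <-> DeltaA x y.
Definition Ann1 (th : con) (ze : con) : Prop := Ann (fun om => om = th) ze.
End Cong.

Definition cm_variety S (E : term S -> term S -> Prop) : Prop :=
  forall B : algebra S, models E B -> con_modular B.

Definition one_elt_subalg S (B : algebra S) (a : B) : Prop :=
  forall (f : sym S) (g : 'I_(arity f) -> B), (forall i, g i = a) -> @op S B f g = a.

Definition nontrivial S (B : algebra S) : Prop := exists x y : B, x <> y.

Definition semi_degenerate S (E : term S -> term S -> Prop) : Prop :=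
  forall B : algebra S, models E B -> nontrivial B -> ~ exists a : B, one_elt_subalg a.

From Pilot Require
Import Defs.
From mathcomp Require Import all_boot.
From Stdlib Require Import FunctionalExtensionality.
Import Defs.
Set Implicit Arguments. Unset Strict Implicit. Unset Printing Implicit Defensive.

(* Take theta to be the join of Omega.  A congruence meeting theta trivially
   meets every omega in Omega trivially.  Conversely, let zeta meet every omega
   in Omega trivially.  Then
   C(omega, zeta; Delta) holds for each omega, and the congruences centralizing
   zeta modulo Delta have a largest element, so C(theta, zeta; Delta) holds.
   Hence mu = theta /\ zeta satisfies [mu, mu] = Delta, which lies in every
   prime congruence, so mu lies in every prime congruence, and mu = Delta
   because A is semiprime. *)

Section Terms.
Variable S : signature.

Fixpoint subst (s : nat -> term S) (t : term S) : term S :=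
  match t with Var n => s n | App f g => App (fun i => subst s (g i)) end.

Fixpoint var_bound (t : term S) : nat :=
  match t with Var n => n.+1 | App f g => \max_(i < arity f) var_bound (g i) end.

Variable A : algebra S.

Lemma eval_subst (v : nat -> A) s t :
  eval v (subst s t) = eval (fun i => eval v (s i)) t.
Proof.
elim: t => [n|f g IH] //=.
by congr op; apply: functional_extensionality => i; exact: IH.
Qed.

Lemma eval_var_bound (v v' : nat -> A) t :
  (forall i, i < var_bound t -> v i = v' i) -> eval v t = eval v' t.
Proof.
elim: t => [n|f g IH] /= Hvv'; first exact: Hvv'.
congr op; apply: functional_extensionality => i; apply: IH => j Hj.
apply: Hvv'; apply: leq_trans Hj _; exact: (@leq_bigmax _ (fun i => var_bound (g i)) i).
Qed.

Lemma eval_con (th : con A) v v' t :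
  (forall i, th (v i) (v' i)) -> th (eval v t) (eval v' t).
Proof.
move=> Hvv'; elim: t => [n|f g IH] /=; first exact: Hvv'.
by apply: con_compat => i; exact: IH.
Qed.

End Terms.

Definition upd (I : eqType) (T : Type) (v : I -> T) (k : I) (a : T) : I -> T :=
  fun i => if i == k then a else v i.

Definition mix (T : Type) (P : nat -> bool) (p q : nat -> T) : nat -> T :=
  fun i => if P i then p i else q i.

Section Congruences.
Variables (S : signature) (A : algebra S).

Definition gen_con (R : rel A) : con A.
refine (@Con S A (cg R) _ _ _ _).
- by move=> x th _; apply: con_refl.
- by move=> x y Hxy th HR; apply: con_sym; apply: Hxy.
- by move=> x y z Hxy Hyz th HR; apply: con_trans (Hxy th HR) (Hyz th HR).
- by move=> f a b Hab th HR; apply: con_compat => i; apply: Hab.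
Defined.

Lemma sub_gen_con (R : rel A) : subrel R (gen_con R).
Proof. by move=> x y Hxy th HR; apply: HR. Qed.

Lemma gen_con_min (R : rel A) (th : con A) : subrel R th -> subrel (gen_con R) th.
Proof. by move=> HR x y; apply. Qed.

Definition Delta_con : con A.
refine (@Con S A (@DeltaA S A) _ _ _ _); rewrite /DeltaA.
- by [].
- by move=> x y ->.
- by move=> x y z -> ->.
- by move=> f a b Hab; congr op; apply: functional_extensionality.
Defined.

Definition meet_con (a b : con A) : con A.
refine (@Con S A (cmeet a b) _ _ _ _); rewrite /cmeet.
- by move=> x; split; apply: con_refl.
- by move=> x y [Ha Hb]; split; apply: con_sym.
- by move=> x y z [Ha Hb] [Ha' Hb']; split; apply: con_trans; eauto.
- by move=> f x y Hxy; split; apply: con_compat => i; case: (Hxy i).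
Defined.

Lemma op_compat_of_coordinate_compat (R : rel A) :
  (forall x, R x x) -> (forall x y z, R x y -> R y z -> R x z) ->
  (forall f (x : 'I_(arity f) -> A) j a b,
      R a b -> R (op (upd x j a)) (op (upd x j b))) ->
  forall f (x y : 'I_(arity f) -> A),
    (forall j, R (x j) (y j)) -> R (op x) (op y).
Proof.
move=> Rrefl Rtrans Rcoord f x y Rxy.
pose z m (j : 'I_(arity f)) := if j < m then y j else x j.
have Rz m : R (op x) (op (z m)).
  elim: m => [|m IH].
    by have -> : z 0 = x by apply: functional_extensionality.
  apply: Rtrans IH _; case: (ltnP m (arity f)) => [lt_m|ge_m].
  - pose o := Ordinal lt_m.
    have Ez : z m = upd (z m) o (x o).
      apply: functional_extensionality => j; rewrite /upd.
      by case: (eqVneq j o) => [->|//]; rewrite /z ltnn.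
    have EzS : z m.+1 = upd (z m) o (y o).
      apply: functional_extensionality => j; rewrite /upd /z ltnS leq_eqVlt.
      case: (eqVneq j o) => [->|ne]; first by rewrite eqxx.
      by have -> : (j == m :> nat) = false := negbTE ne.
    by rewrite EzS {1}Ez; apply: Rcoord.
  - have -> : z m.+1 = z m.
      apply: functional_extensionality => j; rewrite /z.
      have lt_j := leq_trans (ltn_ord j) ge_m.
      by rewrite lt_j ltnS (ltnW lt_j).
    exact: Rrefl.
have -> : y = z (arity f) by apply: functional_extensionality => j; rewrite /z ltn_ord.
exact: Rz.
Qed.

End Congruences.

Section Centralizer.
Variables (S : signature) (A : algebra S).

Lemma centralizes_subrel (a b a' b' d : rel A) :
  subrel a' a -> subrel b' b -> centralizes a b d -> centralizes a' b' d.
Proof.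
move=> Ha Hb Cabd t P u w c e Hu Hce.
exact: Cabd t P u w c e (fun i => Ha _ _ (Hu i)) (fun i => Hb _ _ (Hce i)).
Qed.

Lemma centralizes_Delta_of_disjoint (a b : con A) :
  (forall x y, a x y -> b x y -> x = y) -> centralizes a b (@DeltaA S A).
Proof.
move=> Hdisj t P u w c e Hu Hce /= Huce; apply: Hdisj.
- have Huw d : forall i, a (mix P u d i) (mix P w d i).
    by move=> i; rewrite /mix; case: (P i); [exact: Hu | exact: con_refl].
  apply: con_trans (con_sym (eval_con t (Huw c))) _.
  have -> : eval (mix P u c) t = eval (mix P u e) t := Huce.
  exact: eval_con.
- by apply: eval_con => i; case: (P i); [exact: con_refl | exact: Hce].
Qed.

(* The centralizer (Delta : zeta): the largest alpha with C(alpha, zeta; Delta),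
   described by exchanging one alpha-slot of the term condition at a time. *)
Definition centralizer (ze : rel A) : rel A := fun a b =>
  forall (t : term S) (P : nat -> bool) (u c e : nat -> A) (k : nat),
    P k -> (forall i, ze (c i) (e i)) ->
    (eval (mix P (upd u k a) c) t = eval (mix P (upd u k a) e) t <->
     eval (mix P (upd u k b) c) t = eval (mix P (upd u k b) e) t).

Lemma centralizer_poly_compat (ze : rel A) a b (s : term S) (w : nat -> A) m :
  centralizer ze a b ->
  centralizer ze (eval (upd w m a) s) (eval (upd w m b) s).
Proof.
move=> Hab t P u c e k Pk Hce.
(* Variables of t move to even indices; the odd ones carry the parameters of s. *)
pose s' := subst (fun j => if j == m then Var S k.*2 else Var S j.*2.+1) s.
pose t' := subst (fun i => if i == k then s' else Var S i.*2) t.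
pose P' i := odd i || P i./2.
pose u' i := if odd i then w i./2 else u i./2.
have transport z (d : nat -> A) :
    eval (mix P' (upd u' k.*2 z) (fun i => d i./2)) t' =
    eval (mix P (upd u k (eval (upd w m z) s)) d) t.
  rewrite eval_subst; congr eval; apply: functional_extensionality => i.
  rewrite /mix /upd; case: eqVneq => [->|ne].
  - rewrite Pk eval_subst; congr eval; apply: functional_extensionality => j.
    case: eqVneq => _ /=; first by rewrite /P' odd_double doubleK Pk eqxx.
    have -> : (j.*2.+1 == k.*2) = false.
      by apply/negbTE/eqP => /(congr1 odd); rewrite /= !odd_double.
    by rewrite /P' /u' /= odd_double /= uphalf_double.
  - by rewrite /P' /u' /= odd_double doubleK (can_eq doubleK) (negbTE ne).
rewrite -!transport; apply: Hab => //.
by rewrite /P' odd_double doubleK Pk orbT.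
Qed.

Lemma centralizer_coordinate_compat (ze : rel A) f (x : 'I_(arity f) -> A) j a b :
  centralizer ze a b -> centralizer ze (op (upd x j a)) (op (upd x j b)).
Proof.
pose w m := if (insub m : option 'I_(arity f)) is Some o then x o else a.
have op_eval z :
    op (upd x j z) = eval (upd w j z) (App (fun i : 'I_(arity f) => Var S i)).
  rewrite /=; f_equal; apply: functional_extensionality => i; rewrite /upd.
  case: (eqVneq i j) => [->|ne]; first by rewrite eqxx.
  by have -> : (i == j :> nat) = false := negbTE ne; rewrite /w valK.
by rewrite !op_eval; apply: centralizer_poly_compat.
Qed.

Lemma centralizer_refl (ze : rel A) x : centralizer ze x x.
Proof. by move=> t P u c e k _ _. Qed.

Lemma centralizer_trans (ze : rel A) x y z :
  centralizer ze x y -> centralizer ze y z -> centralizer ze x z.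
Proof.
move=> Hxy Hyz t P u c e k Pk Hce.
exact: iff_trans (Hxy t P u c e k Pk Hce) (Hyz t P u c e k Pk Hce).
Qed.

Definition centralizer_con (ze : rel A) : con A.
refine (@Con S A (centralizer ze) (@centralizer_refl ze) _ (@centralizer_trans ze) _).
- by move=> x y Hxy t P u c e k Pk Hce; apply: iff_sym; apply: Hxy.
- apply: op_compat_of_coordinate_compat; last exact: centralizer_coordinate_compat.
  + exact: centralizer_refl.
  + exact: centralizer_trans.
Defined.

Lemma centralizer_of_centralizes (om ze : con A) a b :
  centralizes om ze (@DeltaA S A) -> om a b -> centralizer ze a b.
Proof.
move=> Com Hab t P u c e k Pk Hce.
have Hupd a' b' : om a' b' -> forall i, om (upd u k a' i) (upd u k b' i).
  by move=> Hab' i; rewrite /upd; case: eqP => _ //; apply: con_refl.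
split; [exact: Com (Hupd _ _ Hab) Hce | exact: Com (Hupd _ _ (con_sym Hab)) Hce].
Qed.

Lemma centralizes_of_centralizer (J ze : rel A) :
  subrel J (centralizer ze) -> centralizes J ze (@DeltaA S A).
Proof.
move=> HJ t P u w c e Hu Hce /= Huce; rewrite /DeltaA.
pose um m i := if i < m then w i else u i.
have Hum m : eval (mix P (um m) c) t = eval (mix P (um m) e) t.
  elim: m => [|m IH].
    by have -> : um 0 = u by apply: functional_extensionality.
  have Eum : um m = upd (um m) m (u m).
    apply: functional_extensionality => i; rewrite /upd.
    by case: eqP => // ->; rewrite /um ltnn.
  have EumS : um m.+1 = upd (um m) m (w m).
    apply: functional_extensionality => i; rewrite /upd /um ltnS leq_eqVlt.
    by case: eqP => [->|].
  rewrite EumS; case Pm: (P m).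
  - by apply/(HJ _ _ (Hu m) t P (um m) c e m Pm Hce); rewrite -Eum.
  - have mix_upd d : mix P (upd (um m) m (w m)) d = mix P (um m) d.
      apply: functional_extensionality => i; rewrite /mix /upd.
      by case: eqP => [->|]; rewrite ?Pm.
    by rewrite !mix_upd.
have Hbound d : eval (mix P (um (var_bound t)) d) t = eval (mix P w d) t.
  by apply: eval_var_bound => i lt_i; rewrite /mix /um lt_i.
by have := Hum (var_bound t); rewrite !Hbound.
Qed.

End Centralizer.

Section Annihilators.
Variables (S : signature) (A : algebra S).

Lemma semiprime_abelian_trivial (mu : con A) :
  semiprime A -> centralizes mu mu (@DeltaA S A) -> forall x y, mu x y -> x = y.
Proof.
move=> Asp Cmu x y Hxy; apply: (proj1 (Asp x y)) => phi [_ phi_prime] Delta_phi.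
have comm_phi : subrel (comm mu mu) phi.
  by move=> p q Hpq; apply: Delta_phi; exact: Hpq (Delta_con A) Cmu.
by case: (phi_prime mu mu comm_phi) => /(_ x y Hxy).
Qed.

Lemma AnnP (Om : con A -> Prop) (ze : con A) :
  Ann Om ze <-> forall om, Om om -> forall x y, ze x y -> om x y -> x = y.
Proof.
split=> [Hann om Hom x y Hze Hom'|Hdisj om Hom x y].
- exact: (proj1 (Hann om Hom x y)).
- by split=> [[]|<-]; [exact: Hdisj | split; apply: con_refl].
Qed.

Definition join_con (Om : con A -> Prop) : con A :=
  gen_con (fun x y => exists2 om : con A, Om om & om x y).

End Annihilators.

Theorem lemma2p26 (S : signature) (E : term S -> term S -> Prop)
  (hsd : semi_degenerate E) (hcm : cm_variety E)
  (A : algebra S) (hA : models E A) (hsp : semiprime A) :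
  forall Om : con A -> Prop, exists th : con A,
    forall ze : con A, Ann Om ze <-> Ann1 th ze.
Proof.
move=> Om; exists (join_con Om) => ze.
split=> [/AnnP ze_Om | /AnnP ze_join]; apply/AnnP.
- move=> _ -> x y Hze Hjoin.
  have join_centralizer : subrel (join_con Om) (centralizer ze).
    apply: (gen_con_min (th := centralizer_con ze)) => a b [om Hom Hab].
    apply: centralizer_of_centralizes Hab.
    by apply: centralizes_Delta_of_disjoint => p q Hp Hq; exact: ze_Om Hom p q Hq Hp.
  pose mu := meet_con (join_con Om) ze.
  have mu_abelian : centralizes mu mu (@DeltaA S A).
    by apply: centralizes_subrel (centralizes_of_centralizer join_centralizer) => p q [].
  exact: (semiprime_abelian_trivial hsp mu_abelian).
- move=> om Hom x y Hze Hom'.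
  by apply: ze_join Hze _ => //; apply: sub_gen_con; exists om.
Qed.
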